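(* Let $Z_0, Z_1, Z_2 \in \{0,1\}^K$ be fixed products, and let $Y(Z_1,Z_0)$, $Y(Z_2,Z_0)$, $Y(Z_1,Z_2)$ be binary choice outcomes of a respondent generated by the random utility model described in the context. Then the conditional distribution of $Y(Z_1,Z_0) - Y(Z_2,Z_0)$ given the event $\{Y(Z_1,Z_0) \neq Y(Z_2,Z_0)\}$ equals the distribution of $2Y(Z_1,Z_2) - 1$; that is, $$Y(Z_1,Z_0) - Y(Z_2,Z_0) \,\big|\, \{Y(Z_1,Z_0) \neq Y(Z_2,Z_0)\} \ \stackrel{d}{=}\ 2Y(Z_1,Z_2) - 1 .$$
   Context: Products are binary vectors in $\{0,1\}^K$. For two products $A,B$, the choice outcome $Y(A,B)\in\{0,1\}$ equals $1$ if the respondent chooses $A$ over $B$ and $0$ if $B$ is chosen. Choices follow the random utility maximisation model: each product $Z$ has utility $U(Z)+\epsilon$, where $U:\{0,1\}^K\to\mathbb{R}$ is a deterministic (representative) utility and the noise terms are independent standard Gumbel (type I extreme value) random variables, drawn independently for each product in each comparison; the alternative with larger total utility is chosen. Consequently $P(Y(A,B)=1) = \frac{e^{U(A)}}{e^{U(A)}+e^{U(B)}}$, and the outcomes of distinct paired comparisons (here $Y(Z_1,Z_0)$ and $Y(Z_2,Z_0)$) are independent. *)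

From HB Require Import structures.
From mathcomp Require Import all_boot all_order all_algebra.
From mathcomp Require Import all_classical all_reals all_analysis.
Set Implicit Arguments. Unset Strict Implicit. Unset Printing Implicit Defensive.
Import Order.TTheory GRing.Theory Num.Theory.
Local Open Scope classical_set_scope.
Local Open Scope ring_scope.

Definition product (K : nat) := {ffun 'I_K -> bool}.

(* Logit choice probability: P(Y(A,B)=1) = e^{U A} / (e^{U A} + e^{U B}). *)
Definition logit_prob (R : realType) (K : nat) (U : product K -> R)
  (A B : product K) : R := expR (U A) / (expR (U A) + expR (U B)).

Definition ev (T : Type) (X : T -> bool) (b : bool) : set T := [set t | X t = b].

Definition bool_rv (d : measure_display) (T : measurableType d)
  (X : T -> bool) : Prop := forall b, measurable (ev X b).

Definition indep_bool (d : measure_display) (T : measurableType d) (R : realType)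
  (P : probability T R) (X Y : T -> bool) : Prop :=
  forall b1 b2, P (ev X b1 `&` ev Y b2) = (P (ev X b1) * P (ev Y b2))%E.

Definition condprob (d : measure_display) (T : measurableType d) (R : realType)
  (P : probability T R) (A B : set T) : R :=
  fine (P (A `&` B)) / fine (P B).

Definition b2R (R : realType) (b : bool) : R := (b : nat)%:R.

From HB Require Import structures.
From mathcomp Require Import all_boot all_order all_algebra.
From mathcomp Require Import all_classical all_reals all_analysis.
From mathcomp Require Import ring lra.
Import Order.TTheory GRing.Theory Num.Theory.
Local Open Scope classical_set_scope.
Local Open Scope ring_scope.

(* On the event that Y(Z1,Z0) and Y(Z2,Z0) disagree, their difference is +1 or -1 according
   as Y(Z1,Z0) is 1 or 0, and by independence these two cases have probabilities
   p1 (1 - p2) and (1 - p1) p2, where p_i is the logit probability of Z_i against Z0.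
   After normalisation the baseline weight e^(U Z0) cancels, leaving the logit probability
   of Z1 against Z2: this is the independence of irrelevant alternatives of the logit
   model, and it is exactly the law of 2 Y(Z1,Z2) - 1. *)

Section LogitProb.
Variables (R : realType) (K : nat) (U : product K -> R).
Implicit Types A B C : product K.

Lemma logit_prob_gt0 A B : 0 < logit_prob U A B.
Proof. by rewrite /logit_prob divr_gt0 ?addr_gt0 ?expR_gt0. Qed.

Lemma logit_probC A B : 1 - logit_prob U A B = logit_prob U B A.
Proof.
rewrite /logit_prob; have ? : expR (U A) + expR (U B) != 0.
  by rewrite gt_eqF // addr_gt0 ?expR_gt0.
by field; rewrite addrC.
Qed.

Lemma logit_prob_iia A B C :
  logit_prob U A C * logit_prob U C B /
    (logit_prob U A C * logit_prob U C B + logit_prob U C A * logit_prob U B C)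
  = logit_prob U A B.
Proof.
rewrite /logit_prob.
set a := expR (U A); set b := expR (U B); set c := expR (U C).
have [a0 b0 c0] : [/\ 0 < a, 0 < b & 0 < c] by split; apply: expR_gt0.
by field; rewrite !gt_eqF //; repeat (apply: addr_gt0 || apply: mulr_gt0).
Qed.

End LogitProb.

Section SignEncoding.
Variable R : realType.

Lemma b2R_sign (b : bool) : 2 * b2R R b - 1 = if b then 1 else -1.
Proof. by case: b; rewrite /b2R /=; lra. Qed.

Lemma b2R_sub_neq (x y : bool) : x != y -> b2R R x - b2R R y = 2 * b2R R x - 1.
Proof. by case: x; case: y => // _; rewrite /b2R /=; lra. Qed.

End SignEncoding.

Lemma two_point_normalize (R : realFieldType) (s1 s0 : bool) (m1 m0 r : R) :
  m1 + m0 != 0 -> m1 / (m1 + m0) = r ->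
  fine ((if s1 then m1%:E else 0) + (if s0 then m0%:E else 0))%E / fine (m1%:E + m0%:E)%E
  = fine ((if s1 then r%:E else 0) + (if s0 then (1 - r)%:E else 0))%E.
Proof.
move=> m10 <-; rewrite -EFinD.
by case: s1; case: s0; rewrite /= ?adde0 ?add0e -?EFinD /=; field.
Qed.

Lemma ev_false (T : Type) (X : T -> bool) : ev X false = ~` ev X true.
Proof. by apply/seteqP; split => t; rewrite /ev /=; case: (X t). Qed.

Section BoolEvents.
Context {d : measure_display} {T : measurableType d} {R : realType}.
Variable P : probability T R.
Implicit Types (X : T -> bool) (D : set T).

Lemma prob_ev_false X : bool_rv X -> P (ev X false) = (1 - P (ev X true))%E.
Proof. by move=> mX; rewrite ev_false probability_setC. Qed.

Lemma measure_split_bool X D : bool_rv X -> measurable D ->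
  P D = (P (ev X true `&` D) + P (ev X false `&` D))%E.
Proof.
move=> mX mD; rewrite -measureU; try exact: measurableI.
  by rewrite -setIUl ev_false setUCr setTI.
by apply/seteqP; split => t // [[+ _] [+ _]]; rewrite /ev /= => ->.
Qed.

Lemma setI_ev_preimage {V : Type} (f : bool -> V) (S : set V) X D b :
  ev X b `&` ([set t | f (X t) \in S] `&` D)
  = if f b \in S then ev X b `&` D else set0.
Proof.
apply/seteqP; split => t; case: ifP => fbS; rewrite /ev /=.
- by case=> Xt [_ Dt].
- by case=> Xt []; rewrite Xt fbS.
- by case=> Xt Dt; split; rewrite ?Xt.
- by [].
Qed.

Lemma measurable_bool_preimage X (g : bool -> bool) : bool_rv X ->
  measurable [set t | g (X t)].
Proof.
move=> mX; have -> : [set t | g (X t)] =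
    (if g true then ev X true else set0) `|` (if g false then ev X false else set0).
  apply/seteqP; split => t; rewrite /ev /=.
    by case Xt: (X t) => gX; [left | right]; rewrite gX /=.
  by case: ifP => gT; case: ifP => gF [] //= ->.
by apply: measurableU; case: ifP.
Qed.

Lemma measure_preimage_bool {V : Type} (f : bool -> V) (S : set V) X D :
  bool_rv X -> measurable D ->
  P ([set t | f (X t) \in S] `&` D) =
  ((if f true \in S then P (ev X true `&` D) else 0) +
   (if f false \in S then P (ev X false `&` D) else 0))%E.
Proof.
move=> mX mD; rewrite (measure_split_bool X) //; last first.
  by apply: measurableI => //; exact: (measurable_bool_preimage X (fun b => f b \in S)).
by rewrite !setI_ev_preimage; case: ifP; case: ifP; rewrite ?measure0.
Qed.

Lemma measure_sign_preimage (S : set R) X D : bool_rv X -> measurable D ->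
  P ([set t | 2 * b2R R (X t) - 1 \in S] `&` D) =
  ((if 1%R \in S then P (ev X true `&` D) else 0) +
   (if (-1)%R \in S then P (ev X false `&` D) else 0))%E.
Proof.
move=> mX mD; have /= := measure_preimage_bool (fun b => 2 * b2R R b - 1) S X D mX mD.
by rewrite !b2R_sign.
Qed.

End BoolEvents.

Section Disagreement.
Context {d : measure_display} {T : measurableType d} {R : realType}.
Implicit Types X Y : T -> bool.

Lemma setI_ev_neq X Y b :
  ev X b `&` [set t | X t != Y t] = ev X b `&` ev Y (~~ b).
Proof.
apply/seteqP; split => t [Xt]; rewrite /ev /= in Xt *; rewrite Xt.
  by case: b {Xt}; case: (Y t).
by move->; case: b {Xt}.
Qed.

Lemma measurable_neq X Y : bool_rv X -> bool_rv Y ->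
  measurable [set t | X t != Y t].
Proof.
move=> mX mY; have -> : [set t | X t != Y t] =
    (ev X true `&` ev Y false) `|` (ev X false `&` ev Y true).
  apply/seteqP; split => t; rewrite /ev /=; case: (X t); case: (Y t) => //=.
  - by left.
  - by right.
  - by case=> -[].
  - by case=> -[].
by apply: measurableU; apply: measurableI.
Qed.

Lemma preimage_sub_neq X Y (S : set R) :
  [set t | b2R R (X t) - b2R R (Y t) \in S] `&` [set t | X t != Y t]
  = [set t | 2 * b2R R (X t) - 1 \in S] `&` [set t | X t != Y t].
Proof. by apply/seteqP; split => t [/= + XY]; rewrite b2R_sub_neq. Qed.

End Disagreement.

Theorem lemma2 (R : realType) (d : measure_display) (T : measurableType d)
  (P : probability T R) (K : nat) (U : product K -> R)
  (Z0 Z1 Z2 : product K) (Y10 Y20 Y12 : T -> bool) :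
  bool_rv Y10 -> bool_rv Y20 -> bool_rv Y12 ->
  P (ev Y10 true) = (logit_prob U Z1 Z0)%:E ->
  P (ev Y20 true) = (logit_prob U Z2 Z0)%:E ->
  P (ev Y12 true) = (logit_prob U Z1 Z2)%:E ->
  indep_bool P Y10 Y20 ->
  forall S : set R,
    condprob P [set t | b2R R (Y10 t) - b2R R (Y20 t) \in S]
               [set t | Y10 t != Y20 t]
    = fine (P [set t | 2 * b2R R (Y12 t) - 1 \in S]).
Proof.
move=> mY10 mY20 mY12 pY10 pY20 pY12 indep S.
have mD : measurable [set t | Y10 t != Y20 t] by exact: measurable_neq.
rewrite /condprob preimage_sub_neq measure_sign_preimage //.
rewrite [P [set _ | _ != _]](measure_split_bool P Y10) //.
rewrite -[[set t | _ * _ - _ \in S]]setIT measure_sign_preimage // !setIT.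
rewrite !setI_ev_neq /= !indep !prob_ev_false // pY10 pY20 pY12 -!EFinB -!EFinM.
apply: two_point_normalize; rewrite !logit_probC ?logit_prob_iia //.
by rewrite gt_eqF // addr_gt0 // mulr_gt0 // logit_prob_gt0.
Qed.
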